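(* In the full subcategory $\mathbf{Sys}_0(L)$ of $T_0$ affine systems, the embeddings are exactly the monomorphisms.
   Context: Fix a variety $\mathbf{A}$ of algebras (full subcategory of the category of $\Omega$-algebras and homomorphisms closed under products, subalgebras and homomorphic images) in which every algebra is non-empty (standing assumptions also include set-indexed coproducts and a free algebra over a singleton). Fix an $\mathbf{A}$-algebra $L$ with more than one element; $L^X$ is the power algebra. An affine system is $(X,\kappa,A)$ with $X$ a set, $A$ an algebra, $\kappa:A\to L^X$ a homomorphism; a morphism $(f,\varphi):(X_1,\kappa_1,A_1)\to(X_2,\kappa_2,A_2)$ is a map $f:X_1\to X_2$ with a homomorphism $\varphi:A_2\to A_1$ such that $\kappa_1(\varphi(a))(x)=\kappa_2(a)(f(x))$ for all $a\in A_2,x\in X_1$; composition $(g,\psi)\circ(f,\varphi)=(g\circ f,\varphi\circ\psi)$. A system is $T_0$ if for all $x,y\in X$, $\kappa(a)(x)=\kappa(a)(y)$ for all $a\in A$ implies $x=y$; $\mathbf{Sys}_0(L)$ is the full subcategory of $T_0$ systems, concrete over $\mathbf{Set}\times\mathbf{A}^{op}$. A morphism $(f,\varphi):C_1\to C_2$ of $\mathbf{Sys}_0(L)$ is initial if for every $T_0$ system $C_3=(X_3,\kappa_3,A_3)$ and every map $g:X_3\to X_1$ and homomorphism $\psi:A_1\to A_3$ such that $(f\circ g,\psi\circ\varphi)$ is a morphism $C_3\to C_2$, the pair $(g,\psi)$ is a morphism $C_3\to C_1$. An embedding is an initial morphism with $f$ injective and $\varphi$ an epimorphism in $\mathbf{A}$.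 *)

Set Implicit Arguments.

Record signature := Signature { Op : Type; ar : Op -> Type }.

Record alg (S : signature) := Alg {
  carrier :> Type;
  op : forall o : Op S, (ar S o -> carrier) -> carrier }.
Arguments op {S} a o _.

Definition is_hom {S : signature} (A B : alg S) (h : A -> B) : Prop :=
  forall (o : Op S) (args : ar S o -> A),
    h (op A o args) = op B o (fun i => h (args i)).

Definition prod_alg {S : signature} {I : Type} (F : I -> alg S) : alg S :=
  @Alg S (forall i, F i) (fun o args i => op (F i) o (fun j => args j i)).

Definition power {S : signature} (L : alg S) (X : Type) : alg S :=
  prod_alg (fun _ : X => L).

(* A variety: a class of algebras closed under products, subalgebras
   (= algebras admitting an injective homomorphism into a member; only
   non-empty ones, as all algebras of the variety are non-empty) and
   homomorphic images (= codomains of surjective homomorphisms). *)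
Definition variety {S : signature} (V : alg S -> Prop) : Prop :=
  (forall (I : Type) (F : I -> alg S), (forall i, V (F i)) -> V (prod_alg F)) /\
  (forall (A B : alg S) (h : B -> A), is_hom B A h ->
      (forall x y, h x = h y -> x = y) -> inhabited (carrier B) -> V A -> V B) /\
  (forall (A B : alg S) (h : A -> B), is_hom A B h ->
      (forall y, exists x, h x = y) -> V A -> V B).

(* Standing assumptions: every algebra is non-empty, set-indexed
   coproducts exist and a free algebra over a singleton exists. *)
Definition standing {S : signature} (V : alg S -> Prop) : Prop :=
  (forall A : alg S, V A -> inhabited (carrier A)) /\
  (forall (I : Type) (F : I -> alg S), (forall i, V (F i)) ->
     exists (C : alg S) (inj : forall i, F i -> C),
       V C /\ (forall i, is_hom (F i) C (inj i)) /\
       forall (D : alg S), V D -> forall (h : forall i, F i -> D),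
         (forall i, is_hom (F i) D (h i)) ->
         (exists u : C -> D, is_hom C D u /\ forall i x, u (inj i x) = h i x) /\
         (forall u1 u2 : C -> D, is_hom C D u1 -> is_hom C D u2 ->
            (forall i x, u1 (inj i x) = h i x) ->
            (forall i x, u2 (inj i x) = h i x) -> forall z, u1 z = u2 z)) /\
  (exists (F : alg S) (e : carrier F), V F /\
     forall (D : alg S), V D -> forall d : D,
       (exists u : F -> D, is_hom F D u /\ u e = d) /\
       (forall u1 u2 : F -> D, is_hom F D u1 -> is_hom F D u2 ->
          u1 e = d -> u2 e = d -> forall z, u1 z = u2 z)).

Record system {S : signature} (L : alg S) := System {
  sX : Type;
  sA : alg S;
  skappa : sA -> sX -> L }.
Arguments sX {S L} s.
Arguments sA {S L} s.
Arguments skappa {S L} s _ _.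

Definition T0 {S : signature} {L : alg S} (C : system L) : Prop :=
  forall x y : sX C, (forall a : sA C, skappa C a x = skappa C a y) -> x = y.

Definition sys0 {S : signature} (V : alg S -> Prop) {L : alg S}
    (C : system L) : Prop :=
  V (sA C) /\ is_hom (sA C) (power L (sX C)) (skappa C) /\ T0 C.

Definition is_morph {S : signature} {L : alg S} (C1 C2 : system L)
    (f : sX C1 -> sX C2) (phi : sA C2 -> sA C1) : Prop :=
  is_hom (sA C2) (sA C1) phi /\
  forall (a : sA C2) (x : sX C1), skappa C1 (phi a) x = skappa C2 a (f x).

Definition epi_alg {S : signature} (V : alg S -> Prop) (A B : alg S)
    (phi : A -> B) : Prop :=
  forall (D : alg S), V D -> forall h1 h2 : B -> D,
    is_hom B D h1 -> is_hom B D h2 ->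
    (forall a, h1 (phi a) = h2 (phi a)) -> forall b, h1 b = h2 b.

Definition initial {S : signature} (V : alg S -> Prop) {L : alg S}
    (C1 C2 : system L) (f : sX C1 -> sX C2) (phi : sA C2 -> sA C1) : Prop :=
  forall C3 : system L, sys0 V C3 ->
  forall (g : sX C3 -> sX C1) (psi : sA C1 -> sA C3),
    is_hom (sA C1) (sA C3) psi ->
    is_morph C3 C2 (fun x => f (g x)) (fun a => psi (phi a)) ->
    is_morph C3 C1 g psi.

Definition embedding {S : signature} (V : alg S -> Prop) {L : alg S}
    (C1 C2 : system L) (f : sX C1 -> sX C2) (phi : sA C2 -> sA C1) : Prop :=
  initial V C1 C2 f phi /\
  (forall x y, f x = f y -> x = y) /\
  epi_alg V (sA C2) (sA C1) phi.

(* Monomorphism in Sys_0(L); composition is (f,phi)o(g,psi) = (f o g, psi o phi),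
   and morphisms are compared extensionally. *)
Definition mono_sys0 {S : signature} (V : alg S -> Prop) {L : alg S}
    (C1 C2 : system L) (f : sX C1 -> sX C2) (phi : sA C2 -> sA C1) : Prop :=
  forall C3 : system L, sys0 V C3 ->
  forall (g1 g2 : sX C3 -> sX C1) (psi1 psi2 : sA C1 -> sA C3),
    is_morph C3 C1 g1 psi1 -> is_morph C3 C1 g2 psi2 ->
    (forall x, f (g1 x) = f (g2 x)) ->
    (forall b, psi1 (phi b) = psi2 (phi b)) ->
    (forall x, g1 x = g2 x) /\ (forall a, psi1 a = psi2 a).

(* A monomorphism (f, phi) can be tested against two systems of [Sys_0(L)].
   Probing with a system whose point set is empty, morphisms from it into [C1]
   are just homomorphisms out of [sA C1], so [phi] is an epimorphism of the variety.
   Probing with the one-point system [(1, id, L)], a morphism from it into [C1]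
   is a point [x] of [C1] together with evaluation at [x], so [f] is injective.
   Finally, an epimorphic [phi] makes [(f, phi)] initial: the two
   homomorphisms [a |-> kappa3 (psi a) x] and [a |-> kappa1 a (g x)] into [L]
   agree after [phi]. *)

From Stdlib Require Import FunctionalExtensionality.

Set Implicit Arguments.

Lemma is_hom_comp {S : signature} (A B C : alg S) (h1 : A -> B) (h2 : B -> C) :
  is_hom A B h1 -> is_hom B C h2 -> is_hom A C (fun a => h2 (h1 a)).
Proof. intros H1 H2 o args. rewrite H1, H2. reflexivity. Qed.

Lemma is_hom_eval {S : signature} (A L : alg S) (X : Type) (k : A -> power L X) :
  is_hom A (power L X) k -> forall x : X, is_hom A L (fun a => k a x).
Proof. intros Hk x o args. rewrite Hk. reflexivity. Qed.

Section ProbeSystems.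

Context {S : signature} {V : alg S -> Prop} {L : alg S}.

Definition empty_system (D : alg S) : system L :=
  @System S L Empty_set D (fun _ e => match e with end).

Lemma sys0_empty_system {D : alg S} : V D -> sys0 V (empty_system D).
Proof.
  intros HD. split; [exact HD | split].
  - intros o args. apply functional_extensionality_dep. intros [].
  - intros [].
Qed.

Lemma is_morph_from_empty_system {D : alg S} {C : system L} {h : sA C -> D} :
  is_hom (sA C) D h ->
  is_morph (empty_system D) C (fun e : Empty_set => match e with end) h.
Proof. intros Hh. split; [exact Hh | intros a []]. Qed.

Definition point_system : system L := @System S L unit L (fun l _ => l).

Lemma sys0_point_system : V L -> sys0 V point_system.
Proof.
  intros HL. split; [exact HL | split].
  - intros o args. reflexivity.
  - intros [] [] _. reflexivity.
Qed.

Lemma is_morph_point_system {C : system L} (x : sX C) :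
  is_hom (sA C) (power L (sX C)) (skappa C) ->
  is_morph point_system C (fun _ => x) (fun a => skappa C a x).
Proof. intros Hk. split; [exact (is_hom_eval Hk x) | reflexivity]. Qed.

End ProbeSystems.

Section Monomorphisms.

Variables (S : signature) (V : alg S -> Prop) (L : alg S) (C1 C2 : system L).
Variables (f : sX C1 -> sX C2) (phi : sA C2 -> sA C1).

Lemma mono_sys0_epi_alg :
  mono_sys0 V C1 C2 f phi -> epi_alg V (sA C2) (sA C1) phi.
Proof.
  intros Hmono D HD h1 h2 Hh1 Hh2 Heq.
  exact (proj2 (Hmono _ (sys0_empty_system (L := L) HD) _ _ h1 h2
                  (is_morph_from_empty_system Hh1) (is_morph_from_empty_system Hh2)
                  (fun e => match e with end) Heq)).
Qed.

Lemma mono_sys0_inj :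
  V L -> is_hom (sA C1) (power L (sX C1)) (skappa C1) ->
  is_morph C1 C2 f phi -> mono_sys0 V C1 C2 f phi ->
  forall x y, f x = f y -> x = y.
Proof.
  intros HL Hk1 [_ Hm] Hmono x y Hxy.
  refine (proj1 (Hmono _ (sys0_point_system HL) _ _ _ _
                   (is_morph_point_system x Hk1) (is_morph_point_system y Hk1)
                   (fun _ => Hxy) _) tt).
  intros b. cbn. rewrite !Hm, Hxy. reflexivity.
Qed.

Lemma epi_alg_initial :
  V L -> is_hom (sA C1) (power L (sX C1)) (skappa C1) ->
  is_morph C1 C2 f phi -> epi_alg V (sA C2) (sA C1) phi ->
  initial V C1 C2 f phi.
Proof.
  intros HL Hk1 [_ Hm] Hepi C3 [_ [Hk3 _]] g psi Hpsi [_ Hm3].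
  split; [exact Hpsi |]. intros a x.
  refine (Hepi L HL (fun a => skappa C3 (psi a) x) (fun a => skappa C1 a (g x))
            (is_hom_comp Hpsi (is_hom_eval Hk3 x)) (is_hom_eval Hk1 (g x)) _ a).
  intros b. cbn. rewrite Hm3, Hm. reflexivity.
Qed.

Lemma embedding_mono_sys0 : embedding V C1 C2 f phi -> mono_sys0 V C1 C2 f phi.
Proof.
  intros [_ [Hinj Hepi]] C3 [HA3 _] g1 g2 psi1 psi2 [Hp1 _] [Hp2 _] Hg Hpsi.
  split.
  - intros x. exact (Hinj _ _ (Hg x)).
  - exact (Hepi _ HA3 _ _ Hp1 Hp2 Hpsi).
Qed.

End Monomorphisms.

Theorem proposition12 (S : signature) (V : alg S -> Prop)
  (HV : variety V) (Hst : standing V)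
  (L : alg S) (HL : V L) (HL2 : exists l1 l2 : carrier L, l1 <> l2)
  (C1 C2 : system L) (H1 : sys0 V C1) (H2 : sys0 V C2)
  (f : sX C1 -> sX C2) (phi : sA C2 -> sA C1) (Hm : is_morph C1 C2 f phi) :
  embedding V C1 C2 f phi <-> mono_sys0 V C1 C2 f phi.
Proof.
  destruct H1 as [_ [Hk1 _]].
  split; [apply embedding_mono_sys0 |].
  intros Hmono.
  pose proof (mono_sys0_epi_alg Hmono) as Hepi.
  exact (conj (epi_alg_initial HL Hk1 Hm Hepi)
              (conj (mono_sys0_inj HL Hk1 Hm Hmono) Hepi)).
Qed.
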